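(* Let $n \geq 10$, $l = \lfloor n/2 \rfloor$, let $V$ be a real vector space with basis $\varepsilon_1,\dots,\varepsilon_l$, and let $\Delta = \{\sum_{i=1}^l k_i\varepsilon_i \mid k_i \in \{0,\pm1\}\} \setminus \{0\}$ (the root system of the Cartan type Lie superalgebra $H(n)$). Then $\Delta$ has a parabolic subset which is not strongly parabolic.
   Context: A subset $P \subset \Delta$ is parabolic if $\Delta = P \cup -P$ and $\alpha,\beta\in P$, $\alpha+\beta\in\Delta$ imply $\alpha+\beta\in P$. A triangular decomposition $\Delta = \Delta^-\sqcup\Delta^0\sqcup\Delta^+$ is given by some $\lambda\in V^*$ via $\Delta^0 = \Delta\cap\ker\lambda$, $\Delta^\pm = \{\alpha\in\Delta \mid \lambda(\alpha)\gtrless0\}$. $P \subset \Delta$ is strongly parabolic (recursively) if $P = \Delta$, or $P = P^0\sqcup\Delta^+$ for some triangular decomposition (with function $\lambda$) and some $P^0\subset\Delta^0$ which is strongly parabolic as a subset of $\Delta^0$ regarded in the vector space $\ker\lambda$. *)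

From mathcomp Require Import all_boot all_order all_algebra.
From mathcomp Require Import all_classical all_reals.
Set Implicit Arguments. Unset Strict Implicit. Unset Printing Implicit Defensive.
Import Order.TTheory GRing.Theory Num.Theory.
Local Open Scope ring_scope.
Local Open Scope classical_set_scope.

(* The linear functional on R^l with coefficient row c. Every element of
   V^* is of this form. *)
Definition lin (R : realType) (l : nat) (c a : 'rV[R]_l) : R :=
  \sum_(i < l) c ord0 i * a ord0 i.

Definition DeltaH (R : realType) (l : nat) : set 'rV[R]_l :=
  [set a | a <> 0 /\ forall i : 'I_l,
      a ord0 i = 0 \/ a ord0 i = 1 \/ a ord0 i = -1].

Definition parabolic (R : realType) (l : nat) (D P : set 'rV[R]_l) : Prop :=
  P `<=` D /\
  D = P `|` [set - a | a in P] /\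
  (forall a b, P a -> P b -> D (a + b) -> P (a + b)).

Definition Dzero (R : realType) (l : nat) (D : set 'rV[R]_l) (c : 'rV[R]_l)
  : set 'rV[R]_l := [set a | D a /\ lin c a = 0].
Definition Dpos (R : realType) (l : nat) (D : set 'rV[R]_l) (c : 'rV[R]_l)
  : set 'rV[R]_l := [set a | D a /\ 0 < lin c a].

(* The subspace ker lambda is treated inside the fixed V:
   every functional on ker lambda is the restriction of a functional on V. *)
Inductive strongly_parabolic (R : realType) (l : nat)
  : set 'rV[R]_l -> set 'rV[R]_l -> Prop :=
| SP_full (D : set 'rV[R]_l) : strongly_parabolic D D
| SP_step (D : set 'rV[R]_l) (c : 'rV[R]_l) (P0 : set 'rV[R]_l) :
    P0 `<=` Dzero D c ->
    strongly_parabolic (Dzero D c) P0 ->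
    strongly_parabolic D (P0 `|` Dpos D c).

(* A strongly parabolic set P is closed under negation along zero-sum
   relations: if a_1 + ... + a_k = 0 with every a_i in P, then each -a_i that
   is a root lies in P.  Indeed the defining functional is nonnegative on each
   a_i and sums to zero, so all a_i lie in the zero part and we recurse; in the
   base case P is the whole root system.  A parabolic set need not have this
   property: we pull back along the first five coordinates a parabolic set of
   sign patterns containing four patterns with zero sum, one of whose
   negatives it omits.  The parabolicity of that pattern set is a finite check. *)

From mathcomp Require Import all_boot all_order all_algebra.
From mathcomp Require Import all_classical all_reals.

Set Implicit Arguments.
Unset Strict Implicit.
Unset Printing Implicit Defensive.

Import Order.TTheory GRing.Theory Num.Theory.
Local Open Scope ring_scope.
Local Open Scope classical_set_scope.

Section StronglyParabolic.
Variables (R : realType) (l : nat).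
Implicit Types (c a b : 'rV[R]_l) (D P : set 'rV[R]_l).

Lemma linD c a b : lin c (a + b) = lin c a + lin c b.
Proof. by rewrite /lin -big_split; apply: eq_bigr => i _; rewrite mxE mulrDr. Qed.

Lemma lin0 c : lin c 0 = 0.
Proof. by rewrite /lin big1 // => i _; rewrite mxE mulr0. Qed.

Lemma linN c a : lin c (- a) = - lin c a.
Proof. by rewrite /lin -sumrN; apply: eq_bigr => i _; rewrite mxE mulrN. Qed.

Lemma lin_sum c (s : seq 'rV[R]_l) :
  lin c (\sum_(a <- s) a) = \sum_(a <- s) lin c a.
Proof. exact: (big_morph (lin c) (linD c) (lin0 c)). Qed.

Lemma strongly_parabolic_zero_sum D P (s : seq 'rV[R]_l) :
  strongly_parabolic D P -> (forall a, a \in s -> P a) ->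
  \sum_(a <- s) a = 0 -> forall a, a \in s -> D (- a) -> P (- a).
Proof.
move=> SP; elim: SP s => {D P} [//|D c P0 sub_P0 _ IH] s sP s0 a sa Dna.
have lin_ge0 b : b \in s -> 0 <= lin c b.
  by case/sP => [/sub_P0 [_ ->] | [_ /ltW]].
have lin_eq0 b : b \in s -> lin c b = 0.
  have : \sum_(a <- s) lin c a == 0 by rewrite -lin_sum s0 lin0.
  rewrite big_seq psumr_eq0 // => /allP sum0 sb.
  by apply/eqP; exact: implyP (sum0 b sb) sb.
have sP0 b : b \in s -> P0 b.
  by move=> sb; case: (sP _ sb) => // [[_]]; rewrite lin_eq0 ?ltxx.
left; apply: (IH s) => //; split => //.
by rewrite linN lin_eq0 ?oppr0.
Qed.

End StronglyParabolic.

Definition signs : seq int := [:: -1; 0; 1].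

Fixpoint sign_patterns (k : nat) : seq (seq int) :=
  if k is k'.+1 then [seq x :: s | x <- signs, s <- sign_patterns k']
  else [:: [::]].

Lemma mem_sign_patterns k s :
  (s \in sign_patterns k) = (size s == k) && all (mem signs) s.
Proof.
elim: k s => [|k IH] [|x s] //.
  by apply/negbTE/allpairsP => -[[y t] [_ _]].
apply/allpairsP/and3P => [[[y t] /= [ys]]|[sk xs st]].
  by rewrite IH => /andP[/eqP <- st] [-> ->]; split.
by exists (x, s); split; rewrite // IH -eqSS sk.
Qed.

Definition addz (s t : seq int) : seq int := [seq x.1 + x.2 | x <- zip s t].

Lemma size_addz s t : size (addz s t) = minn (size s) (size t).
Proof. by rewrite size_map size_zip. Qed.

Lemma nth_addz s t i : size s = size t -> (addz s t)`_i = s`_i + t`_i.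
Proof.
move=> st; have [lt_i_s | le_s_i] := ltnP i (size s).
  by rewrite (nth_map (0, 0)) ?nth_zip // size_zip -st minnn.
by rewrite !nth_default ?addr0 ?size_addz -?st ?minnn.
Qed.

Section Patterns.
Variables (R : realType) (l : nat).
Implicit Types (a b : 'rV[R]_l) (s t : seq int).

Definition sign_entry (x : R) : Prop := x = 0 \/ x = 1 \/ x = -1.

Lemma intr_sgz (x : R) : sign_entry x -> (sgz x)%:~R = x.
Proof. by move=> [->|[->|->]]; rewrite ?sgz0 ?sgz1 ?sgzN1. Qed.

Lemma sgzD (x y : R) : sign_entry x -> sign_entry y -> sign_entry (x + y) ->
  sgz (x + y) = sgz x + sgz y.
Proof. by move=> sx sy sxy; apply: (@intr_inj R); rewrite intrD !intr_sgz. Qed.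

(* In [DeltaH], [a <> 0] compares the coefficient function of [a] with the
   zero function, not [a] with the zero matrix. *)
Lemma DeltaHE a : DeltaH a <-> a != 0 /\ forall i, sign_entry (a ord0 i).
Proof.
have fun_eq0 : (fun_of_matrix a = 0) <-> a = 0.
  split=> [a0 | ->]; last by apply/funext => i; apply/funext => j; rewrite mxE.
  by apply/matrixP => i j; rewrite mxE (congr1 (fun f => f i j) a0).
split=> [[a0 sa] | [/eqP a0 sa]]; split=> //.
  by apply/eqP; rewrite -fun_eq0.
by rewrite fun_eq0.
Qed.

Lemma DeltaHN a : DeltaH a -> DeltaH (- a).
Proof.
move=> /DeltaHE[a0 sa]; apply/DeltaHE; split; first by rewrite oppr_eq0.
move=> i; rewrite mxE /sign_entry.
by case: (sa i) => [->|[->|->]]; rewrite ?oppr0 ?opprK; auto.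
Qed.

(* Entries of index [i >= l] read as [0]. *)
Definition entry a (i : nat) : R := oapp (fun j => a ord0 j) 0 (insub i).

Lemma entryD a b i : entry (a + b) i = entry a i + entry b i.
Proof. by rewrite /entry; case: insubP => [j _ _|_] /=; rewrite ?mxE ?addr0. Qed.

Lemma entryN a i : entry (- a) i = - entry a i.
Proof. by rewrite /entry; case: insubP => [j _ _|_] /=; rewrite ?mxE ?oppr0. Qed.

Lemma entry0 i : entry 0 i = 0.
Proof. by rewrite /entry; case: insubP => [j _ _|_] /=; rewrite ?mxE. Qed.

Lemma sign_entry_DeltaH a i : DeltaH a -> sign_entry (entry a i).
Proof.
by move=> [_ sa]; rewrite /entry; case: insubP => [j _ _|_] /=; [apply: sa | left].
Qed.

Definition pattern (k : nat) a : seq int := [seq sgz (entry a i) | i <- iota 0 k].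

Lemma pattern_sign_patterns k a : pattern k a \in sign_patterns k.
Proof.
rewrite mem_sign_patterns size_map size_iota eqxx /=.
by apply/allP => _ /mapP[i _ ->]; case: sgzP.
Qed.

Lemma patternD k a b : DeltaH a -> DeltaH b -> DeltaH (a + b) ->
  pattern k (a + b) = addz (pattern k a) (pattern k b).
Proof.
move=> Da Db Dab; rewrite /addz zip_map -map_comp; apply: eq_map => i /=.
by rewrite entryD sgzD //= -?entryD; apply: sign_entry_DeltaH.
Qed.

Lemma patternN k a : pattern k (- a) = map -%R (pattern k a).
Proof. by rewrite -map_comp; apply: eq_map => i /=; rewrite entryN sgzN. Qed.

Lemma pattern0 k : pattern k 0 = nseq k 0.
Proof.
have /all_pred1P -> : all (pred1 0) (pattern k 0).
  by apply/allP => _ /mapP[i _ ->]; rewrite /= entry0 sgz0.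
by rewrite size_map size_iota.
Qed.

Definition row_of_pattern s : 'rV[R]_l := \row_i (s`_i)%:~R.

Lemma row_of_patternD s t : size s = size t ->
  row_of_pattern (addz s t) = row_of_pattern s + row_of_pattern t.
Proof. by move=> st; apply/rowP => i; rewrite !mxE nth_addz // intrD. Qed.

Lemma row_of_pattern_nseq0 k : row_of_pattern (nseq k 0) = 0.
Proof. by apply/rowP => i; rewrite !mxE nth_nseq if_same. Qed.

Section Lift.
Variables (k : nat) (s : seq int).
Hypotheses (le_k_l : (k <= l)%N) (s_sign : s \in sign_patterns k).

Lemma entry_row_of_pattern i : entry (row_of_pattern s) i = (s`_i)%:~R.
Proof.
rewrite /entry; case: insubP => [j _ <-|] /=; first by rewrite mxE.
move: s_sign; rewrite -leqNgt mem_sign_patterns => /andP[/eqP sk _] le_l_i.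
by rewrite nth_default // sk (leq_trans le_k_l).
Qed.

Lemma sgz_nth_sign_pattern i : sgz s`_i = s`_i.
Proof.
move: s_sign; rewrite mem_sign_patterns => /andP[_ /allP ss].
have [lt_i_s | ?] := ltnP i (size s); last by rewrite nth_default.
by have := ss _ (mem_nth 0 lt_i_s); rewrite !inE => /or3P[] /eqP ->.
Qed.

Lemma pattern_row_of_pattern : pattern k (row_of_pattern s) = s.
Proof.
move: (s_sign); rewrite mem_sign_patterns => /andP[/eqP <- _].
rewrite -[RHS](mkseq_nth 0); apply: eq_map => i.
by rewrite entry_row_of_pattern sgz_int sgz_nth_sign_pattern.
Qed.

Lemma DeltaH_row_of_pattern : s != nseq k 0 -> DeltaH (row_of_pattern s).
Proof.
move=> s0; apply/DeltaHE; split.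
  by apply: contra s0 => /eqP r0; rewrite -pattern_row_of_pattern r0 pattern0.
move=> i; rewrite mxE -sgz_nth_sign_pattern /sign_entry.
by case: sgzP => _; rewrite ?rmorphN ?rmorph0 ?rmorph1; auto.
Qed.

End Lift.

Lemma size_foldr_addz k ss : (forall t, t \in ss -> size t = k) ->
  size (foldr addz (nseq k 0) ss) = k.
Proof.
elim: ss => [|t ss IH] sz /=; first by rewrite size_nseq.
rewrite size_addz sz ?mem_head // IH ?minnn // => u u_ss.
by apply: sz; rewrite inE u_ss orbT.
Qed.

Lemma sum_row_of_pattern k ss : (forall t, t \in ss -> size t = k) ->
  \sum_(t <- ss) row_of_pattern t = row_of_pattern (foldr addz (nseq k 0) ss).
Proof.
elim: ss => [|t ss IH] sz; first by rewrite big_nil row_of_pattern_nseq0.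
have sz' u : u \in ss -> size u = k by move=> u_ss; apply: sz; rewrite inE u_ss orbT.
rewrite big_cons IH // /= row_of_patternD // size_foldr_addz //.
exact: sz (mem_head _ _).
Qed.

Section PatternPreimage.
Variables (k : nat) (Q : pred (seq int)).

Definition pattern_preimage : set 'rV[R]_l :=
  [set a | DeltaH a /\ Q (pattern k a)].

Hypothesis Q_total :
  forall s, s \in sign_patterns k -> Q s || Q (map -%R s).
Hypothesis Q_addr_closed : forall s t,
  s \in sign_patterns k -> t \in sign_patterns k -> Q s -> Q t ->
  all (mem signs) (addz s t) -> Q (addz s t).

Lemma parabolic_pattern_preimage : parabolic (@DeltaH R l) pattern_preimage.
Proof.
split; first by move=> a [].
split.
  apply/seteqP; split=> [a Da | a [[Da _] | [b [Db _] <-]]] //;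
    last exact: DeltaHN.
  have /orP[Qa | QNa] := Q_total (pattern_sign_patterns k a); first by left.
  right; exists (- a); last exact: opprK.
  by split; [exact: DeltaHN | rewrite patternN].
move=> a b [Da Qa] [Db Qb] Dab; split=> //.
have := pattern_sign_patterns k (a + b).
rewrite patternD // mem_sign_patterns => /andP[_ sum_sign].
by apply: Q_addr_closed; rewrite ?pattern_sign_patterns.
Qed.

End PatternPreimage.

Lemma pattern_preimage_not_strongly_parabolic k (Q : pred (seq int))
    (ss : seq (seq int)) s :
  (k <= l)%N -> all (fun t => t \in sign_patterns k) ss -> all Q ss ->
  nseq k 0 \notin ss -> foldr addz (nseq k 0) ss = nseq k 0 ->
  s \in ss -> ~~ Q (map -%R s) ->
  ~ strongly_parabolic (@DeltaH R l) (pattern_preimage k Q).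
Proof.
move=> le_k_l /allP ss_sign /allP Q_ss ss0 ss_sum s_ss QNs SP.
have DeltaH_lift t : t \in ss -> DeltaH (row_of_pattern t).
  move=> t_ss; apply: DeltaH_row_of_pattern le_k_l (ss_sign t t_ss) _.
  by apply: contraNneq ss0 => <-.
have preimage_lift a : a \in map row_of_pattern ss -> pattern_preimage k Q a.
  case/mapP=> t t_ss ->; split; first exact: DeltaH_lift.
  by rewrite pattern_row_of_pattern //; [exact: Q_ss | exact: ss_sign].
have sum_lifts : \sum_(a <- map row_of_pattern ss) a = 0.
  rewrite big_map (sum_row_of_pattern (k := k)) ?ss_sum ?row_of_pattern_nseq0 //.
  by move=> t /ss_sign; rewrite mem_sign_patterns => /andP[/eqP].
have [_] := strongly_parabolic_zero_sum SP preimage_lift sum_lifts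
  (map_f _ s_ss) (DeltaHN (DeltaH_lift s s_ss)).
by rewrite patternN pattern_row_of_pattern ?ss_sign //; apply/negP.
Qed.

End Patterns.

Definition weight (s : seq int) : int :=
  s`_0 + 2 * s`_1 + 3 * s`_2 + 4 * s`_3 + 6 * s`_4.

(* A parabolic subset of the weight-zero sign patterns containing
   [zero_sum_patterns] but not the negative of their first member. *)
Definition weight_kernel_patterns : seq (seq int) :=
  [:: [:: -1; 0; 1; 1; -1]; [:: -1; 1; -1; -1; 1]; [:: 0; 1; 0; 1; -1];
      [:: 1; -1; -1; 1; 0]; [:: 1; 0; 1; -1; 0]; [:: 1; 1; -1; 0; 0];
      [:: 1; 1; 1; 0; -1]].

Definition example_patterns : pred (seq int) := fun s =>
  (s == nseq 5 0) || (0 < weight s) || (s \in weight_kernel_patterns).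

Lemma example_patterns_total s : s \in sign_patterns 5 ->
  example_patterns s || example_patterns (map -%R s).
Proof. by move: s; apply/allP; vm_compute. Qed.

Lemma example_patterns_addr_closed s t :
  s \in sign_patterns 5 -> t \in sign_patterns 5 ->
  example_patterns s -> example_patterns t ->
  all (mem signs) (addz s t) -> example_patterns (addz s t).
Proof.
have closed : all (fun s => all (fun t =>
    example_patterns s ==> example_patterns t ==>
    all (mem signs) (addz s t) ==> example_patterns (addz s t))
  (sign_patterns 5)) (sign_patterns 5) by vm_compute.
by move=> /(allP closed)/allP/[apply]/implyP/[apply]/implyP/[apply]/implyP.
Qed.

Definition zero_sum_patterns : seq (seq int) :=
  [:: [:: -1; 0; 1; 1; -1]; [:: -1; 1; -1; -1; 1];
      [:: 1; -1; -1; 1; 0]; [:: 1; 0; 1; -1; 0]].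

Theorem mainTheorem4 (R : realType) (n : nat) :
  (10 <= n)%N ->
  exists P : set 'rV[R]_(n./2),
    parabolic (@DeltaH R n./2) P /\ ~ strongly_parabolic (@DeltaH R n./2) P.
Proof.
move=> le10n; have le5l : (5 <= n./2)%N by exact: (half_leq le10n).
exists (pattern_preimage 5 example_patterns); split.
  exact: parabolic_pattern_preimage example_patterns_total
    example_patterns_addr_closed.
apply: (pattern_preimage_not_strongly_parabolic le5l (ss := zero_sum_patterns)
  (s := [:: -1; 0; 1; 1; -1])); by vm_compute.
Qed.
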